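(* Let $v_1,\dots,v_n\in\mathbb{R}^d$ and let $b\ge d+1$ be an integer. Let $x\in[0,1]^n$ with $\sum_{i=1}^n x(i)=b$ and $X=\sum_{i=1}^n x(i)v_iv_i^\top$. Let $S\subseteq[n]$ with $|S|=b$ be such that $Z=\sum_{i\in S}v_iv_i^\top$ is nonsingular, and let \[ Z'=Z-v_{i^*}v_{i^*}^\top+v_{j^*}v_{j^*}^\top,\quad (i^*,j^* )\in\arg\max_{i\in S,\,j\in[n]\setminus S}\det(Z-v_iv_i^\top+v_jv_j^\top). \] If $\det(Z)^{1/d}\le\frac{b-d-1}{b}\det(X)^{1/d}$, then $\det(Z')\ge\big(1+\frac{d}{4b^3}\big)\det(Z)$. *)

From HB Require Import structures.
From mathcomp Require Export all_boot all_order all_algebra.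
From mathcomp Require Export reals exp.

Set Implicit Arguments.
Unset Strict Implicit.
Unset Printing Implicit Defensive.

Import Order.TTheory GRing.Theory Num.Theory.
Local Open Scope ring_scope.

Definition outer (R : realType) (d : nat) (v : 'cV[R]_d) : 'M[R]_d := v *m v^T.

Definition gram_set (R : realType) (d n : nat) (v : 'I_n -> 'cV[R]_d)
  (S : {set 'I_n}) : 'M[R]_d := \sum_(i in S) outer (v i).

Definition gram_wt (R : realType) (d n : nat) (v : 'I_n -> 'cV[R]_d)
  (x : 'I_n -> R) : 'M[R]_d := \sum_(i < n) x i *: outer (v i).

Definition swap_mx (R : realType) (d n : nat) (v : 'I_n -> 'cV[R]_d)
  (Z : 'M[R]_d) (i j : 'I_n) : 'M[R]_d := Z - outer (v i) + outer (v j).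

(* Let G = Z^-1 and l_j = v_j^T G v_j (the leverage of v_j). Writing the
   swapped matrix as Z (1 + P Q) with P Q of rank two, Sylvester's determinant
   identity gives det (Z - v_i v_i^T + v_j v_j^T) = det Z * r(i, j), where
   r(i, j) = (1 - l_i) (1 + l_j) + (v_i^T G v_j)^2.
   Since sum_(i in S) l_i = d and sum_(i in S) (v_i^T G v_j)^2 = l_j,
   averaging r(i, j) <= r(istar, jstar) over i in S with weights x_j
   (j outside S), and over pairs with weights (1 - x_i) x_j, bounds
   r(istar, jstar) from below in terms of the mass m of x outside S, of
   B = sum_(j outside S) x_j l_j and of T = tr (G X) = sum_i x_i l_i.
   The eigenvalues of G X are nonnegative, so AM-GM gives
   det (G X)^(1/d) <= T / d and the hypothesis turns into
   d <= (b - d - 1) / b * T. An elementary two-case estimate on these real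
   inequalities then yields r(istar, jstar) >= 1 + d / (4 b^3). *)

From HB Require Import structures.
From mathcomp Require Import all_boot all_order all_algebra.
From mathcomp Require Import reals exp.
From mathcomp Require Import complex.
From mathcomp Require Import ring lra.
Import Order.TTheory GRing.Theory Num.Theory.
Local Open Scope ring_scope.

Set Implicit Arguments.
Unset Strict Implicit.
Unset Printing Implicit Defensive.

Section RankTwoUpdate.
Variable R : comUnitRingType.

Lemma det_mx22 (A : 'M[R]_2) : \det A = A 0 0 * A 1 1 - A 0 1 * A 1 0.
Proof.
have lift01 : lift 0 (0 : 'I_1) = 1 :> 'I_2 by apply/val_inj.
have lift10 : lift 1 (0 : 'I_1) = 0 :> 'I_2 by apply/val_inj.
rewrite (expand_det_row _ 0) !big_ord_recl big_ord0 addr0 /cofactor !det_mx11 !mxE /=.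
by rewrite lift01 lift10 expr0 expr1 mul1r mulN1r mulrN.
Qed.

Lemma det_1D_mulmxC m n (P : 'M[R]_(m, n)) (Q : 'M[R]_(n, m)) :
  \det (1%:M + P *m Q) = \det (1%:M + Q *m P).
Proof.
have lower : block_mx 1%:M (- P) Q 1%:M
    = block_mx 1%:M 0 Q 1%:M *m block_mx 1%:M (- P) 0 (1%:M + Q *m P).
  rewrite mulmx_block !(mul1mx, mulmx1, mul0mx, mulmx0, addr0, add0r) mulmxN.
  by rewrite addrCA addNr addr0.
have upper : block_mx 1%:M (- P) Q 1%:M
    = block_mx (1%:M + P *m Q) (- P) 0 1%:M *m block_mx 1%:M 0 Q 1%:M.
  by rewrite mulmx_block !(mul1mx, mulmx1, mul0mx, mulmx0, addr0, add0r) mulNmx addrK.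
have := congr1 determinant lower; rewrite upper !det_mulmx.
by rewrite !det_lblock !det_ublock !det1 !mul1r !mulr1.
Qed.

Definition bform d (G : 'M[R]_d) (a c : 'cV[R]_d) : R := (a^T *m G *m c) 0 0.

Lemma bform_sym d (G : 'M[R]_d) a c : G^T = G -> bform G a c = bform G c a.
Proof.
move=> G_sym; rewrite /bform -[in LHS](trmxK (a^T *m G *m c)) mxE.
by rewrite !trmx_mul trmxK G_sym mulmxA.
Qed.

Lemma bform_trace d (G : 'M[R]_d) a : bform G a a = \tr (G *m (a *m a^T)).
Proof.
by rewrite /bform -trace_mx11 (mxtrace_mulC (a^T *m G)) (mxtrace_mulC G) mulmxA.
Qed.

Lemma bform_mul d (G : 'M[R]_d) a c e :
  bform G a c * bform G c e = bform (G *m (c *m c^T) *m G) a e.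
Proof.
have mul11 (A B : 'M[R]_1) : (A *m B) 0 0 = A 0 0 * B 0 0 by rewrite mxE big_ord1.
by rewrite /bform -mul11 !mulmxA.
Qed.

Lemma det_rank2_update d (Z : 'M[R]_d) (u w : 'cV[R]_d) : Z \in unitmx ->
  let G := invmx Z in
  \det (Z - u *m u^T + w *m w^T) =
  \det Z * ((1 - bform G u u) * (1 + bform G w w) + bform G u w * bform G w u).
Proof.
move=> Z_unit G.
pose P := \matrix_(k < d, i < 2) (if i == 0 then - (G *m u) k 0 else (G *m w) k 0).
pose Q := \matrix_(i < 2, k < d) (if i == 0 then u k 0 else w k 0).
have ZPQ : Z - u *m u^T + w *m w^T = Z *m (1%:M + P *m Q).
  have PQ : P *m Q = - (G *m u *m u^T) + G *m w *m w^T.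
    by apply/matrixP => a c; rewrite !mxE big_ord_recl big_ord1 !mxE !big_ord1 !mxE mulNr.
  by rewrite PQ mulmxDr mulmx1 mulmxDr mulmxN !mulmxA mulmxV // !mul1mx addrA.
have QP i j : \sum_k Q i k * P k j =
    bform G (if i == 0 then u else w) (if j == 0 then u else w) * (if j == 0 then -1 else 1).
  rewrite /bform -mulmxA !mxE big_distrl /=; apply: eq_bigr => k _; rewrite !mxE.
  by case: (i == 0); case: (j == 0); rewrite /= ?mxE ?mulrN ?mulr1 ?mulrN1.
by rewrite ZPQ det_mulmx det_1D_mulmxC det_mx22 !mxE !QP /=; ring.
Qed.

End RankTwoUpdate.

Lemma gram_set_sym (R : realType) d n (v : 'I_n -> 'cV[R]_d) S :
  (gram_set v S)^T = gram_set v S.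
Proof.
by rewrite /gram_set raddf_sum; apply: eq_bigr => i _ /=; rewrite /outer trmx_mul trmxK.
Qed.

Section Leverage.
Variables (R : realType) (d n : nat) (v : 'I_n -> 'cV[R]_d) (S : {set 'I_n}).
Hypothesis Z_unit : gram_set v S \in unitmx.
Local Notation Z := (gram_set v S).
Local Notation G := (invmx (gram_set v S)).

Definition leverage j := bform G (v j) (v j).

Definition swap_ratio i j :=
  (1 - leverage i) * (1 + leverage j) + bform G (v i) (v j) ^+ 2.

Lemma bform_invmx_gram_sym a c : bform G a c = bform G c a.
Proof. by rewrite bform_sym // trmx_inv gram_set_sym. Qed.

Lemma det_swap_mx i j : \det (swap_mx v Z i j) = \det Z * swap_ratio i j.
Proof.
rewrite /swap_mx /outer det_rank2_update // /swap_ratio expr2.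
by rewrite [bform _ (v j) (v i)]bform_invmx_gram_sym.
Qed.

Lemma sum_leverage : \sum_(i in S) leverage i = d%:R.
Proof.
rewrite (eq_bigr (fun i => \tr (G *m outer (v i)))) => [|i _]; last exact: bform_trace.
by rewrite -raddf_sum /= -mulmx_sumr mulVmx // mxtrace1.
Qed.

Lemma sum_bform_sqr j : \sum_(i in S) bform G (v i) (v j) ^+ 2 = leverage j.
Proof.
rewrite (eq_bigr (fun i => bform (G *m outer (v i) *m G) (v j) (v j))) => [|i _].
  rewrite /bform -summxE -!mulmx_suml -!mulmx_sumr -mulmx_suml -mulmx_sumr.
  by rewrite -[_ *m Z *m G]mulmxA mulmxV // mulmx1.
by rewrite expr2 {1}bform_invmx_gram_sym bform_mul.
Qed.

Lemma sum_wt_leverage (x : 'I_n -> R) :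
  \sum_i x i * leverage i = \tr (G *m gram_wt v x).
Proof.
rewrite /gram_wt mulmx_sumr raddf_sum /=; apply: eq_bigr => i _.
by rewrite /leverage bform_trace -scalemxAr mxtraceZ.
Qed.

Lemma leverage_ge0 j : 0 <= leverage j.
Proof. by rewrite -sum_bform_sqr sumr_ge0 // => i _; exact: sqr_ge0. Qed.

Lemma sum_swap_ratio j :
  \sum_(i in S) swap_ratio i j = (#|S|%:R - d%:R) * (1 + leverage j) + leverage j.
Proof.
by rewrite big_split /= -big_distrl /= sumrB sumr_const sum_leverage sum_bform_sqr.
Qed.

Lemma swap_ratio_ge i j : (1 - leverage i) * (1 + leverage j) <= swap_ratio i j.
Proof. by rewrite lerDl sqr_ge0. Qed.

Section Averaging.
Variables (x : 'I_n -> R) (r : R).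
Hypotheses (x01 : forall i, 0 <= x i <= 1) (sum_x : \sum_i x i = #|S|%:R).
Hypothesis r_max : forall i j, i \in S -> j \notin S -> swap_ratio i j <= r.

Let m := \sum_(j | j \notin S) x j.
Let B := \sum_(j | j \notin S) x j * leverage j.
Let T := \tr (G *m gram_wt v x).

Let x_ge0 i : 0 <= x i. Proof. by case/andP: (x01 i). Qed.
Let x_le1 i : x i <= 1. Proof. by case/andP: (x01 i). Qed.

Lemma sum_in_compl : \sum_(i in S) (1 - x i) = m.
Proof.
have := sum_x; rewrite (bigID (mem S)) sumrB sumr_const /= -/m => <-.
by rewrite addrAC subrr add0r.
Qed.

Lemma out_mass_ge0 : 0 <= m.
Proof. exact: sumr_ge0. Qed.

Lemma out_mass_le : m <= #|S|%:R.
Proof.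
rewrite -sum_x (bigID (mem S)) /= lerDr.
by apply: sumr_ge0.
Qed.

Lemma sum_in_wt_leverage : \sum_(i in S) x i * leverage i = T - B.
Proof. by rewrite /T -sum_wt_leverage [in RHS](bigID (mem S)) /= -/B addrK. Qed.

Lemma trace_sub_le : T - d%:R <= B.
Proof.
rewrite lerBlDl -sum_leverage -[T](subrK B) -sum_in_wt_leverage lerD2r.
by apply: ler_sum => i _; rewrite ler_piMl ?leverage_ge0.
Qed.

Lemma avg_out_le : (#|S|%:R - d%:R) * m + (#|S|%:R - d%:R + 1) * B <= #|S|%:R * m * r.
Proof.
have -> : (#|S|%:R - d%:R) * m + (#|S|%:R - d%:R + 1) * B
    = \sum_(j | j \notin S) x j * \sum_(i in S) swap_ratio i j.
  rewrite /m /B !mulr_sumr -big_split; apply: eq_bigr => j _ /=.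
  rewrite sum_swap_ratio; ring.
have -> : #|S|%:R * m * r = \sum_(j | j \notin S) x j * \sum_(i in S) r.
  by rewrite sumr_const -mulr_suml -/m -mulr_natr; ring.
apply: ler_sum => j jS; apply: ler_wpM2l => //.
by apply: ler_sum => i iS; exact: r_max.
Qed.

Lemma avg_pairs_le : (m + (T - d%:R) - B) * (m + B) <= m ^+ 2 * r.
Proof.
have -> : m + (T - d%:R) - B = \sum_(i in S) (1 - x i) * (1 - leverage i).
  rewrite (eq_bigr (fun i => (1 - x i) + x i * leverage i - leverage i)) => [|i _].
    by rewrite sumrB big_split /= sum_in_compl sum_in_wt_leverage sum_leverage; ring.
  by ring.
have -> : m + B = \sum_(j | j \notin S) x j * (1 + leverage j).
  by rewrite /m /B -big_split; apply: eq_bigr => j _ /=; ring.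
have -> : m ^+ 2 * r = \sum_(i in S) (1 - x i) * \sum_(j | j \notin S) x j * r.
  by rewrite -mulr_suml -mulr_suml sum_in_compl -/m; ring.
rewrite mulr_suml; apply: ler_sum => i iS; rewrite !mulr_sumr.
apply: ler_sum => j jS; rewrite mulrACA [X in _ <= X]mulrA; apply: ler_wpM2l.
  by rewrite mulr_ge0 ?subr_ge0.
exact: le_trans (swap_ratio_ge i j) (r_max iS jS).
Qed.

End Averaging.
End Leverage.

Section EigenvalueAGM.
Variables (C : numClosedFieldType) (d : nat).

Lemma eigenvalue_seq (M : 'M[C]_d) : (0 < d)%N ->
  exists2 r : seq C, size r = d &
    [/\ \det M = \prod_(z <- r) z, \tr M = \sum_(z <- r) z
      & forall z, z \in r -> eigenvalue M z].
Proof.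
move=> d_gt0; have [r char_r] := closed_field_poly_normal (char_poly M).
rewrite (monicP (char_poly_monic M)) scale1r in char_r.
have size_r : size r = d.
  by have := size_char_poly M; rewrite char_r size_prod_XsubC => -[].
exists r => //; split.
- have := char_poly_det M; rewrite char_r coef0_prod_XsubC size_r => /eqP.
  by rewrite (inj_eq (can_inj (signrMK _))) => /eqP.
- have := char_poly_trace M d_gt0.
  rewrite char_r -{1}size_r coefPn_prod_XsubC => [/oppr_inj //|].
  by rewrite size_r -lt0n.
- by move=> z zr; rewrite eigenvalue_root_char char_r root_prod_XsubC.
Qed.

Lemma det_le_mean_trace (M : 'M[C]_d) : (0 < d)%N ->
  (forall a, eigenvalue M a -> 0 <= a) ->
  [/\ 0 <= \det M, \det M <= (\tr M / d%:R) ^+ d & 0 <= \tr M].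
Proof.
move=> d_gt0 eig_ge0; have [r size_r [-> -> eig_r]] := eigenvalue_seq M d_gt0.
have r_ge0 z : z \in r -> 0 <= z by move/eig_r/eig_ge0.
split; [by rewrite big_seq prodr_ge0 | | by rewrite big_seq sumr_ge0].
rewrite (big_nth 0) [X in (X / _) ^+ _](big_nth 0) !big_mkord -size_r.
have nth_ge0 (i : 'I_(size r)) : true -> 0 <= r`_i by move=> _; exact/r_ge0/mem_nth.
by have [AGM _] := leif_AGM nth_ge0; rewrite card_ord in AGM.
Qed.

End EigenvalueAGM.

Section PositiveForms.
Variable R : realType.
Local Notation C := R[i].
Local Notation cmx := (map_mx (real_complex R)).

(* Eigenvalues of B^-1 A are a priori complex even for real A and B, hence
   positivity is tested on complex row vectors. *)
Definition hform d (u : 'rV[C]_d) (A : 'M[R]_d) : C :=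
  (u *m cmx A *m (map_mx (@conjc R) u)^T) 0 0.

Definition psdmx d (A : 'M[R]_d) := forall u, 0 <= hform u A.
Definition pdmx d (A : 'M[R]_d) := forall u, u != 0 -> 0 < hform u A.

Lemma hform0 d (u : 'rV[C]_d) : hform u 0 = 0.
Proof. by rewrite /hform map_mx0 mulmx0 mul0mx mxE. Qed.

Lemma hformD d (u : 'rV[C]_d) : {morph hform u : A B / A + B}.
Proof. by move=> A B; rewrite /hform raddfD /= mulmxDr mulmxDl mxE. Qed.

Lemma hformZ d (u : 'rV[C]_d) a A : hform u (a *: A) = real_complex R a * hform u A.
Proof.
rewrite /hform (_ : cmx (a *: A) = real_complex R a *: cmx A).
  by rewrite -scalemxAr -scalemxAl mxE.
by apply/matrixP => i j; rewrite !mxE rmorphM.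
Qed.

Lemma mul_outer d (u : 'rV[C]_d) w :
  u *m cmx (outer w) = (u *m cmx w) 0 0 *: (cmx w)^T.
Proof.
by rewrite /outer map_mxM mulmxA -map_trmx {1}[u *m _]mx11_scalar mul_scalar_mx.
Qed.

Lemma hform_outer d (u : 'rV[C]_d) w :
  hform u (outer w) = (u *m cmx w) 0 0 * ((u *m cmx w) 0 0)^*%C.
Proof.
have conj_mul : map_mx (@conjc R) u *m cmx w = map_mx (@conjc R) (u *m cmx w).
  by rewrite map_mxM; congr (_ *m _); apply/matrixP => i j; rewrite !mxE /= oppr0.
by rewrite /hform mul_outer -scalemxAl -trmx_mul conj_mul !mxE.
Qed.

Lemma psdmx_outer d (w : 'cV[R]_d) : psdmx (outer w).
Proof. by move=> u; rewrite hform_outer mulcJ_ge0. Qed.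

Lemma psdmxZ d a (A : 'M[R]_d) : 0 <= a -> psdmx A -> psdmx (a *: A).
Proof. by move=> a_ge0 A_psd u; rewrite hformZ mulr_ge0 ?ler0c. Qed.

Lemma psdmx_sum d (I : Type) (r : seq I) (P : pred I) (F : I -> 'M[R]_d) :
  (forall i, P i -> psdmx (F i)) -> psdmx (\sum_(i <- r | P i) F i).
Proof.
move=> F_psd u; rewrite (big_morph _ (hformD u) (hform0 u)).
by apply: sumr_ge0 => i /F_psd.
Qed.

Lemma mulcJ_eq0 (z : C) : (z * z^*%C == 0) = (z == 0).
Proof. by rewrite mulf_eq0 conjc_eq0 orbb. Qed.

Lemma pdmx1 d : pdmx (1%:M : 'M[R]_d).
Proof.
move=> u u_neq0; have -> : hform u 1%:M = \sum_k u 0 k * (u 0 k)^*%C.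
  by rewrite /hform map_mx1 mulmx1 mxE; apply: eq_bigr => k _; rewrite !mxE.
have normsq_ge0 k : true -> 0 <= u 0 k * (u 0 k)^*%C by move=> _; exact: mulcJ_ge0.
rewrite lt_def sumr_ge0 // andbT; apply: contra u_neq0 => /eqP /psumr_eq0P u0.
by apply/eqP/rowP => k; apply/eqP; rewrite mxE -mulcJ_eq0 u0.
Qed.

Lemma pdmx_gram_set d n (v : 'I_n -> 'cV[R]_d) S :
  gram_set v S \in unitmx -> pdmx (gram_set v S).
Proof.
move=> Z_unit u u_neq0.
have terms_ge0 i : i \in S -> 0 <= hform u (outer (v i)) by move=> _; exact: psdmx_outer.
rewrite lt_def {1}/gram_set (big_morph _ (hformD u) (hform0 u)) sumr_ge0 // andbT.
apply: contra u_neq0 => /eqP /(psumr_eq0P terms_ge0) orth.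
have uZ0 : u *m cmx (gram_set v S) = 0.
  rewrite raddf_sum mulmx_sumr big1 // => i iS /=; rewrite mul_outer.
  have /eqP := orth i iS; rewrite hform_outer mulcJ_eq0 => /eqP ->.
  by rewrite scale0r.
have -> : u = u *m cmx (gram_set v S) *m cmx (invmx (gram_set v S)).
  by rewrite -mulmxA -map_mxM mulmxV // map_mx1 mulmx1.
by rewrite uZ0 mul0mx.
Qed.

Lemma eigenvalue_invmx_mul_ge0 d (A B : 'M[R]_d) a : B \in unitmx ->
  psdmx A -> pdmx B -> eigenvalue (cmx (invmx B *m A)) a -> 0 <= a.
Proof.
move=> B_unit A_psd B_pd /eigenvalueP [w w_eigen w_neq0].
pose u := w *m cmx (invmx B).
have wE : w = u *m cmx B by rewrite -mulmxA -map_mxM mulVmx // map_mx1 mulmx1.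
have u_neq0 : u != 0 by apply: contraNneq w_neq0 => u0; rewrite wE u0 mul0mx.
have hformA : hform u A = a * hform u B.
  have uA : u *m cmx A = a *: (u *m cmx B) by rewrite -wE -w_eigen -mulmxA -map_mxM.
  by rewrite /hform uA -scalemxAl mxE.
by rewrite -(pmulr_lge0 _ (B_pd u u_neq0)) -hformA.
Qed.

Lemma det_invmx_mul_le_mean d (A B : 'M[R]_d) : (0 < d)%N -> B \in unitmx ->
  psdmx A -> pdmx B ->
  [/\ 0 <= \det (invmx B *m A), \det (invmx B *m A) <= (\tr (invmx B *m A) / d%:R) ^+ d
    & 0 <= \tr (invmx B *m A)].
Proof.
move=> d_gt0 B_unit A_psd B_pd.
have := det_le_mean_trace d_gt0 (fun a => eigenvalue_invmx_mul_ge0 B_unit A_psd B_pd (a := a)).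
rewrite det_map_mx trace_map_mx !ler0c -(rmorph_nat (real_complex R)) -fmorph_div.
by rewrite -rmorphXn lecR.
Qed.

Lemma det_gram_set_gt0 d n (v : 'I_n -> 'cV[R]_d) S :
  gram_set v S \in unitmx -> 0 < \det (gram_set v S).
Proof.
case: d v => [|d] v Z_unit; first by rewrite det_mx00.
have Z_psd : psdmx (gram_set v S) by apply: psdmx_sum => i _; exact: psdmx_outer.
have [det_ge0 _ _] := det_invmx_mul_le_mean (ltn0Sn d) (unitmx1 _ _) Z_psd (@pdmx1 _).
by rewrite lt_def -unitfE -unitmxE Z_unit; rewrite invmx1 mul1mx in det_ge0.
Qed.

End PositiveForms.

Lemma powR_root_le (R : realType) (k : nat) (p t : R) : (0 < k)%N ->
  0 <= p -> p <= t ^+ k -> 0 <= t -> powR p k%:R^-1 <= t.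
Proof.
move=> k_gt0 p_ge0 p_le t_ge0.
have root_pow : powR (t ^+ k) k%:R^-1 = t.
  by rewrite -powR_mulrn // -powRrM mulfV ?powRr1 // pnatr_eq0 -lt0n.
rewrite -[X in _ <= X]root_pow; apply: ge0_ler_powR; rewrite ?nnegrE ?exprn_ge0 //.
by rewrite invr_ge0 ler0n.
Qed.

Lemma trace_ge_of_det_root_le (R : realType) d n (v : 'I_n -> 'cV[R]_d) S
    (x : 'I_n -> R) c :
  (0 < d)%N -> gram_set v S \in unitmx -> (forall i, 0 <= x i) -> 0 <= c ->
  powR (\det (gram_set v S)) d%:R^-1 <= c * powR (\det (gram_wt v x)) d%:R^-1 ->
  d%:R <= c * \tr (invmx (gram_set v S) *m gram_wt v x).
Proof.
move=> d_gt0 Z_unit x_ge0 c_ge0 root_le.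
have X_psd : psdmx (gram_wt v x).
  by apply: psdmx_sum => i _; apply: psdmxZ (x_ge0 i) (psdmx_outer _).
have [P_ge0 P_le t_ge0] :=
  det_invmx_mul_le_mean d_gt0 Z_unit X_psd (pdmx_gram_set Z_unit).
have Z_gt0 := det_gram_set_gt0 Z_unit.
set Z := gram_set v S in Z_unit root_le P_ge0 P_le t_ge0 Z_gt0 *.
set X := gram_wt v x in root_le P_ge0 P_le t_ge0 *.
have detX : \det X = \det Z * \det (invmx Z *m X).
  by rewrite det_mulmx det_inv mulrA divff ?mul1r // gt_eqF.
rewrite detX powRM ?(ltW Z_gt0) // mulrCA -[X in X <= _]mulr1 in root_le.
rewrite ler_pM2l ?powR_gt0 // in root_le.
have t_mean_ge0 : 0 <= \tr (invmx Z *m X) / d%:R by rewrite divr_ge0.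
have := le_trans root_le (ler_wpM2l c_ge0 (powR_root_le d_gt0 P_ge0 P_le t_mean_ge0)).
by rewrite mulrA ler_pdivlMr ?ltr0n // mul1r.
Qed.

Section SwapGain.
Variables (F : realFieldType) (b d : F).

Let eps := d / (4 * b ^+ 3).
Let E := d + eps * b.
Let K := b - d + 1.

Let eps_ge0 : 0 <= d -> 0 < b -> 0 <= eps.
Proof.
by move=> d_ge0 b_gt0; rewrite divr_ge0 // mulr_ge0 ?ler0n // exprn_ge0 // ltW.
Qed.

Lemma gain_sqr_le : 1 <= d -> d + 1 <= b -> E ^+ 2 + eps * K ^+ 2 <= d * (d + 1).
Proof.
move=> d_ge1 db; have b_gt0 : 0 < b by lra.
have eps_b3 : 4 * (eps * b) * b ^+ 2 = d by rewrite /eps; field; rewrite gt_eqF.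
have eps_b_ge0 : 0 <= eps * b by rewrite mulr_ge0 ?eps_ge0 ?ltW //; lra.
have eps_b2 : 4 * (eps * b) * b <= 1 by nra.
have eps_b : 4 * (eps * b) <= 1 / 2 by nra.
have epsK : eps * K ^+ 2 <= eps * b ^+ 2.
  by rewrite ler_wpM2l ?eps_ge0 // ?ler_sqr ?nnegrE /K; lra.
rewrite /E; nra.
Qed.

Lemma gain_sqr_scaled_le (c : F) : 1 <= d -> d + 1 <= b ->
  d * (d + 1) <= (b - d - 1) * c ->
  b * (E ^+ 2 + eps * K ^+ 2) <= c * K * (K + E).
Proof.
move=> d_ge1 db dc; have c_ge0 : 0 <= c by nra.
have eps_b : 0 <= eps * b by rewrite mulr_ge0 ?eps_ge0 //; lra.
have KE : b + 1 <= K + E by rewrite /K /E; lra.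
apply: (le_trans (ler_wpM2l _ (gain_sqr_le d_ge1 db))); first lra.
have dc' : (b + 1) * (d * (d + 1)) <= (b + 1) * ((b - d - 1) * c).
  by apply: ler_wpM2l => //; lra.
have KE_ge : 0 <= (K + E - (b + 1)) * ((b - d - 1) * c) by rewrite !mulr_ge0 //; lra.
have KEc_ge : 0 <= (K + E) * c by rewrite mulr_ge0 //; lra.
rewrite /K in KE_ge KEc_ge *; nra.
Qed.

Lemma gain_concave_case (c m B : F) : 1 <= d -> d + 1 <= b ->
  d * (d + 1) <= (b - d - 1) * c -> 0 < m <= b -> c <= B -> K * B < E * m ->
  eps * m ^+ 2 <= c * m + c * B - B ^+ 2.
Proof.
move=> d_ge1 db dc /andP [m_gt0 m_le] cB KB.
have c_ge0 : 0 <= c by nra.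
have K_gt0 : 0 < K by rewrite /K; lra.
pose Q := E * m / K.
have QK : Q * K = E * m by rewrite /Q mulfVK ?gt_eqF.
have BQ : B < Q by rewrite -(ltr_pM2r K_gt0) QK mulrC.
have concave : c * Q - Q ^+ 2 <= c * B - B ^+ 2.
  have : 0 <= (Q - B) * (Q + B - c) by rewrite mulr_ge0 //; lra.
  nra.
suff : eps * m ^+ 2 <= c * m + c * Q - Q ^+ 2 by lra.
rewrite -(ler_pM2r (exprn_gt0 2 K_gt0)).
have -> : (c * m + c * Q - Q ^+ 2) * K ^+ 2 = m * (c * K * (K + E)) - m ^+ 2 * E ^+ 2.
  have -> : (c * m + c * Q - Q ^+ 2) * K ^+ 2
      = c * m * K ^+ 2 + c * (Q * K) * K - (Q * K) ^+ 2 by ring.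
  by rewrite QK; ring.
have W_ge0 : 0 <= E ^+ 2 + eps * K ^+ 2.
  by rewrite addr_ge0 ?sqr_ge0 // mulr_ge0 ?sqr_ge0 // eps_ge0 //; lra.
have mW : m * (m * (E ^+ 2 + eps * K ^+ 2)) <= m * (c * K * (K + E)).
  apply: ler_wpM2l; first exact: ltW.
  exact: le_trans (ler_wpM2r W_ge0 m_le) (gain_sqr_scaled_le d_ge1 db dc).
lra.
Qed.

Lemma swap_ratio_gain (T m B r : F) : 1 <= d -> d + 1 <= b ->
  d <= (b - d - 1) / b * T -> 0 <= m <= b -> T - d <= B ->
  (b - d) * m + (b - d + 1) * B <= b * m * r ->
  (m + (T - d) - B) * (m + B) <= m ^+ 2 * r ->
  1 + eps <= r.
Proof.
move=> d_ge1 db dT /andP [m_ge0 m_le] TB avg_out avg_pairs.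
have b_gt0 : 0 < b by lra.
have bT : d * b <= (b - d - 1) * T.
  by move: dT; rewrite -(ler_pM2r b_gt0) mulrAC divfK ?gt_eqF.
have dc : d * (d + 1) <= (b - d - 1) * (T - d) by nra.
have c_gt0 : 0 < T - d by nra.
have m_gt0 : 0 < m.
  rewrite lt_def m_ge0 andbT; apply: contraTneq avg_out => ->.
  by rewrite -ltNge; nra.
have bm_gt0 : 0 < b * m by rewrite mulr_gt0.
(* Either the first average already gives the gain, or B < E m / K and then
   the second one does. *)
have [EmKB | KBEm] := lerP (E * m) (K * B).
  by rewrite -(ler_pM2l bm_gt0); rewrite /E /K in EmKB; nra.
have m_range : 0 < m <= b by rewrite m_gt0 m_le.
have gain := gain_concave_case d_ge1 db dc m_range TB KBEm.
by rewrite -(ler_pM2l (exprn_gt0 2 m_gt0)); nra.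
Qed.

End SwapGain.

Theorem proposition3p4 (R : realType) (d n b : nat) (v : 'I_n -> 'cV[R]_d)
  (x : 'I_n -> R) (S : {set 'I_n}) (istar jstar : 'I_n) :
  (d.+1 <= b)%N ->
  (forall i, 0 <= x i <= 1) ->
  \sum_(i < n) x i = b%:R ->
  #|S| = b ->
  gram_set v S \in unitmx ->
  istar \in S -> jstar \notin S ->
  (forall i j, i \in S -> j \notin S ->
     \det (swap_mx v (gram_set v S) i j)
       <= \det (swap_mx v (gram_set v S) istar jstar)) ->
  powR (\det (gram_set v S)) (d%:R^-1)
    <= (b%:R - d%:R - 1) / b%:R * powR (\det (gram_wt v x)) (d%:R^-1) ->
  \det (swap_mx v (gram_set v S) istar jstar)
    >= (1 + d%:R / (4 * b%:R ^+ 3)) * \det (gram_set v S).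
Proof.
move=> db x01 sum_x cardS Z_unit _ _ swap_max root_le.
case: d v db root_le swap_max Z_unit => [|d] v db root_le swap_max Z_unit.
  by rewrite !det_mx00 mul0r addr0 mul1r.
have Z_gt0 := det_gram_set_gt0 Z_unit.
have r_max i j : i \in S -> j \notin S ->
    swap_ratio v S i j <= swap_ratio v S istar jstar.
  by move=> iS' jS'; rewrite -(ler_pM2l Z_gt0) -!det_swap_mx // swap_max.
have x_ge0 i : 0 <= x i by case/andP: (x01 i).
have db_real : (d.+1)%:R + 1 <= b%:R :> R by rewrite natr1 ler_nat.
have c_ge0 : 0 <= (b%:R - (d.+1)%:R - 1) / b%:R :> R by rewrite divr_ge0 //; lra.
have trace_ge := trace_ge_of_det_root_le (ltn0Sn d) Z_unit x_ge0 c_ge0 root_le.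
rewrite det_swap_mx // mulrC ler_pM2l //.
rewrite -cardS in sum_x db_real trace_ge *.
apply: (swap_ratio_gain _ db_real trace_ge _ (trace_sub_le Z_unit x01)
          (avg_out_le Z_unit x01 r_max) (avg_pairs_le Z_unit x01 sum_x r_max)).
  by rewrite ler1n.
by rewrite (out_mass_ge0 S x01) (out_mass_le x01 sum_x).
Qed.
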